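(* Let an independent instance with $k$ signals ($2\le k\le n$) be $\rho_E$-optimal and let $\varphi^*$ be an optimal scheme with $k$ signals. Then ActionsGreedy computes a set $S\subseteq[n-1]$ of $k-1$ actions with \[f(S)\ge\Big(1-\big(1-\tfrac1k\big)^{k-1}\Big)u_{\mathcal S}(\varphi^* ).\]
   Context: Bayesian persuasion: receiver chooses one of actions $[n]$; the sender sends one of $k$ signals according to a committed scheme; receiver best-responds (ties in favor of sender); optimal = maximizes sender expected utility $u_{\mathcal S}$ among schemes with $k$ signals. Independent instance: action $i$ has independent type over $j\in[m]$ with probability $q_{ij}$, receiver value $\rho_{ij}$, sender value $\xi_{ij}$. $\rho_E=\max_i\sum_jq_{ij}\rho_{ij}$; actions numbered so $\sum_jq_{nj}\rho_{nj}=\rho_E$ and action $n$ maximizes $\sum_jq_{ij}\xi_{ij}$ among actions with $\sum_jq_{ij}\rho_{ij}=\rho_E$. $\rho_E$-optimal: some optimal scheme with $k$ signals gives the receiver conditional expected utility at least $\rho_E$ for every signal sent with positive probability. $g_i(z)=\max\{\sum_jx_{ij}\xi_{ij}:\sum_jx_{ij}\le z,\ \sum_jx_{ij}\rho_{ij}\ge\rho_E\sum_jx_{ij},\ 0\le x_{ij}\le q_{ij}\}$; $f(S)=\max\{\sum_{i\in S\cup\{n\}}g_i(z_i):\sum_{i\in S\cup\{n\}}z_i\le1,z_i\ge0\}$. ActionsGreedy: start with $S=\emptyset$ and, $k-1$ times, add an action $i\in[n-1]\setminus S$ maximizing $f(S\cup\{i\})-f(S)$. *)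

From HB Require Import structures.
From mathcomp Require Import all_boot all_order all_algebra.
From mathcomp Require Import classical_sets reals.
Set Implicit Arguments. Unset Strict Implicit. Unset Printing Implicit Defensive.
Import Order.TTheory GRing.Theory Num.Theory.
Local Open Scope ring_scope.
Local Open Scope classical_set_scope.

Section Persuasion.
Variables (R : realType) (n m k : nat).
(* independent instance: action i has type j with prob q i j,
   receiver value rho i j, sender value xi i j *)
Variables (q rho xi : 'I_n -> 'I_m -> R).

(* states of nature: a type for every action *)
Definition state := {ffun 'I_n -> 'I_m}.

Definition prior (th : state) : R := \prod_(i < n) q i (th i).

(* a signaling scheme with k signals: phi th s = Pr[signal s | state th] *)
Definition scheme := state -> 'I_k -> R.

Definition valid_scheme (phi : scheme) : Prop :=
  (forall th s, 0 <= phi th s) /\ (forall th, \sum_(s < k) phi th s = 1).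

Definition sig_prob (phi : scheme) (s : 'I_k) : R :=
  \sum_(th : state) prior th * phi th s.

(* unnormalized (i.e. multiplied by Pr[s]) expected receiver / sender
   utility of action i when signal s is sent *)
Definition recv_val (phi : scheme) (s : 'I_k) (i : 'I_n) : R :=
  \sum_(th : state) prior th * phi th s * rho i (th i).
Definition send_val (phi : scheme) (s : 'I_k) (i : 'I_n) : R :=
  \sum_(th : state) prior th * phi th s * xi i (th i).

(* receiver best-responds, ties broken in favor of the sender: contribution
   of signal s to the sender's expected utility *)
Definition signal_util (phi : scheme) (s : 'I_k) : R :=
  sup [set send_val phi s i | i in
        [set i : 'I_n | forall j, recv_val phi s j <= recv_val phi s i]].

Definition sender_util (phi : scheme) : R := \sum_(s < k) signal_util phi s.

Definition optimal_scheme (phi : scheme) : Prop :=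
  valid_scheme phi /\ forall psi, valid_scheme psi -> sender_util psi <= sender_util phi.

Definition exp_rho (i : 'I_n) : R := \sum_(j < m) q i j * rho i j.
Definition exp_xi (i : 'I_n) : R := \sum_(j < m) q i j * xi i j.

Definition rhoE : R := sup (range exp_rho).

Definition rhoE_optimal : Prop :=
  exists phi, optimal_scheme phi /\
    forall s, 0 < sig_prob phi s ->
      exists i, rhoE * sig_prob phi s <= recv_val phi s i.

Definition g (i : 'I_n) (z : R) : R :=
  sup [set v | exists x : 'I_m -> R,
         (forall j, 0 <= x j <= q i j) /\
         \sum_(j < m) x j <= z /\
         rhoE * \sum_(j < m) x j <= \sum_(j < m) x j * rho i j /\
         v = \sum_(j < m) x j * xi i j].

(* f(S), where nl is the distinguished action n *)
Definition f (nl : 'I_n) (S : {set 'I_n}) : R :=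
  sup [set v | exists z : 'I_n -> R,
         (forall i, 0 <= z i) /\
         \sum_(i in S :|: [set nl]) z i <= 1 /\
         v = \sum_(i in S :|: [set nl]) g i (z i)].

(* A run of ActionsGreedy: the sequence s of the k-1 chosen actions, in order. *)
Definition actions_greedy (nl : 'I_n) (s : seq 'I_n) : Prop :=
  size s = k.-1 /\
  forall t, (t < k.-1)%N ->
    let St := [set x in take t s] in
    let a := nth nl s t in
    [/\ a != nl, a \notin St &
        forall i, i != nl -> i \notin St ->
          f nl (St :|: [set i]) - f nl St <= f nl (St :|: [set a]) - f nl St].

End Persuasion.

(* Write [g i] for the value of the single-action program and [f S] for the best
   welfare [sum_i g_i (z i)] of a budget allocation [z] on [S + nl].
   1. Each [g i] is concave with [g i 0 = 0] (section SignalValue).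
   2. [f] is monotone and, for any allocation [z] on [U + nl] (with [nl] not in
      [U]), [welfare z - f S <= sum_(i in U \ S) (f (S + i) - f S)]; this is
      shown by mixing allocations for [S] with the restriction of [z] to
      [S + nl] (section Allocation).
   3. Pooling the signals of a rho_E-optimal scheme by recommended action gives
      an allocation on at most [k] actions besides [nl] whose welfare is at
      least the optimal sender utility (section Schemes).
   4. By 2, every greedy step closes a [1/k] fraction of the gap to that
      allocation, so after [k - 1] steps the claimed bound holds; the greedy
      actions are pairwise distinct (section Greedy). *)

From HB Require Import structures.
From mathcomp Require Import all_boot all_order all_algebra.
From mathcomp Require Import classical_sets reals.
From mathcomp Require Import lra.
Set Implicit Arguments. Unset Strict Implicit. Unset Printing Implicit Defensive.
Import Order.TTheory GRing.Theory Num.Theory.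
Local Open Scope ring_scope.
Local Open Scope classical_set_scope.

Section Supremum.
Variable R : realType.
Implicit Types (E : set R) (c v M : R).

Lemma sup_ge_member E M v : (forall w, E w -> w <= M) -> E v -> v <= sup E.
Proof. by move=> EM Ev; apply: ub_le_sup => //; exists M. Qed.

Lemma sup_scaled_le E c M : 0 <= c -> E !=set0 ->
  (forall v, E v -> c * v <= M) -> c * sup E <= M.
Proof.
rewrite le_eqVlt => /orP[/eqP <- [v Ev] EM|c_gt0 E0 EM].
  by rewrite mul0r; apply: le_trans (EM v Ev); rewrite mul0r.
rewrite mulrC -ler_pdivlMr //; apply: ge_sup => // v Ev.
by rewrite ler_pdivlMr // mulrC; apply: EM.
Qed.

End Supremum.

Lemma sum_mix (R : comPzRingType) (I : finType) (t : R) (a b c : I -> R) :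
  \sum_j ((1 - t) * a j + t * b j) * c j =
  (1 - t) * \sum_j a j * c j + t * \sum_j b j * c j.
Proof.
by rewrite !mulr_sumr -big_split; apply: eq_bigr => j _; rewrite mulrDl !mulrA.
Qed.

Lemma sum_delta (R : pzSemiRingType) (I : finType) (i : I) (F : I -> R) :
  \sum_j (j == i)%:R * F j = F i.
Proof.
by rewrite (bigD1 i) //= eqxx mul1r big1 ?addr0 // => j /negbTE ->; rewrite mul0r.
Qed.

Lemma sum_pushforward (R : pzSemiRingType) (I J : finType) (p : I -> J)
    (F : I -> R) (c : J -> R) :
  \sum_j (\sum_i (p i == j)%:R * F i) * c j = \sum_i F i * c (p i).
Proof.
under eq_bigr do rewrite mulr_suml.
rewrite exchange_big /=; apply: eq_bigr => i _.
rewrite -(sum_delta (p i) (fun j => F i * c j)); apply: eq_bigr => j _.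
by rewrite eq_sym mulrA.
Qed.

Section SignalValue.
Variables (R : realType) (n m : nat) (q rho xi : 'I_n -> 'I_m -> R).
Hypothesis q_ge0 : forall i j, 0 <= q i j.

Definition gfeasible (i : 'I_n) (z : R) (x : 'I_m -> R) : Prop :=
  [/\ forall j, 0 <= x j <= q i j, \sum_j x j <= z &
      rhoE q rho * \sum_j x j <= \sum_j x j * rho i j].

Definition gvalue (i : 'I_n) (x : 'I_m -> R) : R := \sum_j x j * xi i j.

Lemma g_sup i z : g q rho xi i z = sup [set gvalue i x | x in gfeasible i z].
Proof.
congr sup; apply/seteqP; split=> v.
  by case=> x [x_q [x_z [x_rho ->]]]; exists x.
by case=> x [x_q x_z x_rho] <-; exists x.
Qed.

Lemma gvalue_le_bound i z x : gfeasible i z x ->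
  gvalue i x <= \sum_j q i j * `|xi i j|.
Proof.
case=> x_q _ _; apply: ler_sum => j _; have /andP[x0 xq] := x_q j.
apply: le_trans (ler_wpM2r (normr_ge0 _) xq).
by rewrite ler_wpM2l // real_ler_norm // num_real.
Qed.

Lemma gfeasible0 i z : 0 <= z -> gfeasible i z (fun=> 0).
Proof.
move=> z0; split=> [j||]; first by rewrite lexx q_ge0.
- by rewrite big1.
- by rewrite !big1 ?mulr0 // => j _; rewrite mul0r.
Qed.

Lemma g_ge i z x : gfeasible i z x -> gvalue i x <= g q rho xi i z.
Proof.
move=> Fx; rewrite g_sup; apply: sup_ge_member; last by exists x.
by move=> _ [y Fy <-]; apply: gvalue_le_bound Fy.
Qed.

Lemma g_le i z c M : 0 <= z -> 0 <= c ->
  (forall x, gfeasible i z x -> c * gvalue i x <= M) -> c * g q rho xi i z <= M.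
Proof.
move=> z0 c0 bound; rewrite g_sup; apply: sup_scaled_le => //.
  by exists (gvalue i (fun=> 0)); exists (fun=> 0) => //; apply: gfeasible0.
by move=> _ [x Fx <-]; apply: bound.
Qed.

Lemma g_ge0 i z : 0 <= z -> 0 <= g q rho xi i z.
Proof.
move=> z0; apply: le_trans (g_ge (gfeasible0 i z0)).
by rewrite /gvalue big1 // => j _; rewrite mul0r.
Qed.

(* With no mass available, the only feasible distribution is zero. *)
Lemma g0 i : g q rho xi i 0 = 0.
Proof.
apply/eqP; rewrite eq_le g_ge0 // andbT -[leLHS]mul1r.
apply: g_le => // x [x_q x_z _]; rewrite mul1r.
have x0 j : x j = 0.
  have /andP[xj0 _] := x_q j; apply/eqP; rewrite eq_le xj0 andbT.
  apply: le_trans x_z; rewrite (bigD1 j) //= lerDl.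
  by apply: sumr_ge0 => l _; have /andP[] := x_q l.
by rewrite /gvalue big1 // => j _; rewrite x0 mul0r.
Qed.

Lemma g_le_bound i z : 0 <= z -> g q rho xi i z <= \sum_j q i j * `|xi i j|.
Proof.
move=> z0; rewrite -[leLHS]mul1r; apply: g_le => // x Fx.
by rewrite mul1r (gvalue_le_bound Fx).
Qed.

Lemma gfeasible_mix i a b t xa xb : 0 <= t <= 1 ->
  gfeasible i a xa -> gfeasible i b xb ->
  gfeasible i ((1 - t) * a + t * b) (fun j => (1 - t) * xa j + t * xb j).
Proof.
move=> /andP[t0 t1] [xa_q xa_a xa_rho] [xb_q xb_b xb_rho].
have t0' : 0 <= 1 - t by rewrite subr_ge0.
have mass : \sum_j ((1 - t) * xa j + t * xb j) =
    (1 - t) * \sum_j xa j + t * \sum_j xb j.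
  by rewrite big_split /= -!mulr_sumr.
split=> [j||]; rewrite ?mass.
- have /andP[a0 aq] := xa_q j; have /andP[b0 bq] := xb_q j.
  rewrite addr_ge0 ?mulr_ge0 //=.
  apply: le_trans (lerD (ler_wpM2l t0' aq) (ler_wpM2l t0 bq)) _.
  by rewrite -mulrDl subrK mul1r.
- by apply: lerD; apply: ler_wpM2l.
- rewrite sum_mix mulrDr (mulrCA _ (1 - t)) (mulrCA _ t).
  by apply: lerD; apply: ler_wpM2l.
Qed.

Lemma g_concave i a b t : 0 <= a -> 0 <= b -> 0 <= t <= 1 ->
  (1 - t) * g q rho xi i a + t * g q rho xi i b <= g q rho xi i ((1 - t) * a + t * b).
Proof.
move=> a0 b0 t01; have /andP[t0 t1] := t01.
set c := (1 - t) * a + t * b.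
have mix_le xa xb : gfeasible i a xa -> gfeasible i b xb ->
    (1 - t) * gvalue i xa <= g q rho xi i c - t * gvalue i xb.
  move=> Fa Fb; rewrite lerBrDr; apply: le_trans (g_ge (gfeasible_mix t01 Fa Fb)).
  by rewrite /gvalue sum_mix.
have ga_le xb : gfeasible i b xb ->
    t * gvalue i xb <= g q rho xi i c - (1 - t) * g q rho xi i a.
  move=> Fb; rewrite lerBrDr addrC -lerBrDr.
  by apply: g_le => // [|xa Fa]; [lra | exact: mix_le].
by rewrite addrC -lerBrDr; apply: g_le.
Qed.

End SignalValue.

(* Choice of the mixing weight [t = c / (1 - sz)] used to make room for mass
   [c] on a new action: mixing an allocation of mass [sy <= 1] with weight
   [1 - t] and one of mass [sz] with weight [t] leaves exactly enough budget. *)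
Lemma mixture_budget (R : realFieldType) (sy sz c : R) :
  0 <= c -> sy <= 1 -> sz + c <= 1 ->
  let t := c / (1 - sz) in
  [/\ 0 <= t <= 1, c = t * (1 - sz) & (1 - t) * sy + t * sz + c <= 1].
Proof.
move=> c0 sy1 szc1 t; have [sz1|sz1] := eqVneq (1 - sz) 0.
  have c_eq0 : c = 0 by lra.
  have t_eq0 : t = 0 by rewrite /t sz1 invr0 mulr0.
  by rewrite t_eq0 c_eq0 lexx ler01 mul0r; split=> //; lra.
have sz_lt1 : 0 < 1 - sz by rewrite lt_neqAle eq_sym sz1 /=; lra.
have t01 : 0 <= t <= 1.
  by rewrite /t divr_ge0 ?(ltW sz_lt1) //= ler_pdivrMr // mul1r; lra.
have ct : c = t * (1 - sz) by rewrite divfK.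
split=> //; have /andP[_ t1] := t01.
have mass : t * sz + c = t by rewrite ct mulrBr mulr1 addrC subrK.
have : (1 - t) * sy <= 1 - t by rewrite ler_piMr // subr_ge0.
lra.
Qed.

Section Allocation.
Variables (R : realType) (n m : nat) (q rho xi : 'I_n -> 'I_m -> R).
Hypothesis q_ge0 : forall i j, 0 <= q i j.
Variable nl : 'I_n.

Local Notation g := (g q rho xi).
Local Notation f := (f q rho xi nl).

Definition alloc (S : {set 'I_n}) (z : 'I_n -> R) : Prop :=
  [/\ forall i, 0 <= z i, forall i, i \notin S :|: [set nl] -> z i = 0
    & \sum_i z i <= 1].

Definition welfare (z : 'I_n -> R) : R := \sum_i g i (z i).

Lemma alloc0 S : alloc S (fun=> 0).
Proof. by split=> //; rewrite big1. Qed.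

Lemma welfare0 : welfare (fun=> 0) = 0.
Proof. by rewrite /welfare big1 // => i _; rewrite g0. Qed.

Lemma f_sup S : f S = sup [set welfare z | z in alloc S].
Proof.
pose P := S :|: [set nl]; congr sup; apply/seteqP; split=> v.
  case=> z [z0 [zP ->]].
  exists (fun i => if i \in P then z i else 0); last first.
    by rewrite /welfare [RHS]big_mkcond; apply: eq_bigr => i _; case: ifP; rewrite ?g0.
  by split=> [i|i /negbTE ->|]; [case: ifP | | rewrite -big_mkcond].
case=> z [z0 z_out z1] <-; exists z; split=> //; split.
  by apply: le_trans z1; rewrite [leRHS](bigID (mem P)) /= lerDl sumr_ge0.
rewrite /welfare (bigID (mem P)) /= [X in _ + X]big1 ?addr0 // => i /z_out ->.
exact: g0.
Qed.

Lemma welfare_le_f S z : alloc S z -> welfare z <= f S.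
Proof.
move=> Az; rewrite f_sup; apply: (@sup_ge_member _ _ (\sum_i \sum_j q i j * `|xi i j|)).
  by move=> _ [y [y0 _ _] <-]; apply: ler_sum => i _; apply: g_le_bound.
by exists z.
Qed.

Lemma f_le S c M : 0 <= c ->
  (forall z, alloc S z -> c * welfare z <= M) -> c * f S <= M.
Proof.
move=> c0 bound; rewrite f_sup; apply: sup_scaled_le => //.
  by exists (welfare (fun=> 0)); exists (fun=> 0) => //; apply: alloc0.
by move=> _ [z Az <-]; apply: bound.
Qed.

Lemma f_ge0 S : 0 <= f S.
Proof. by rewrite -welfare0; apply/welfare_le_f/alloc0. Qed.

Lemma f_mono (S S' : {set 'I_n}) : S \subset S' -> f S <= f S'.
Proof.
move=> sSS'; rewrite -[leLHS]mul1r; apply: f_le => // z [z0 z_out z1].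
rewrite mul1r; apply: welfare_le_f; split=> // i iS'; apply: z_out.
by apply: contra iS'; rewrite !inE => /orP[/(fintype.subsetP sSS') ->|->]; rewrite ?orbT.
Qed.

(* Adding an action [i] to [S]: a convex combination of two allocations for [S]
   together with mass [c] on [i] is an allocation for [S :|: [set i]]; by
   concavity of the [g_j] its welfare dominates the combination of welfares. *)
Lemma f_add_mixture S i y y' c t :
  i \notin S :|: [set nl] -> alloc S y -> alloc S y' -> 0 <= c -> 0 <= t <= 1 ->
  (1 - t) * \sum_j y j + t * \sum_j y' j + c <= 1 ->
  (1 - t) * welfare y + t * welfare y' + g i c <= f (S :|: [set i]).
Proof.
move=> iS [y0 y_out _] [y'0 y'_out _] c0 t01 budget; have /andP[t0 t1] := t01.
pose w j := (1 - t) * y j + t * y' j + (j == i)%:R * c.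
apply: le_trans (welfare_le_f (z := w) _); last first.
  split=> [j|j|].
  - by rewrite !addr_ge0 ?mulr_ge0 ?subr_ge0 ?ler0n.
  - rewrite !inE !negb_or => /andP[/andP[jS ji] jnl].
    have jP : j \notin S :|: [set nl] by rewrite !inE negb_or jS.
    by rewrite /w y_out // y'_out // (negbTE ji) !mulr0 mul0r !addr0.
  - by rewrite !big_split /= -!mulr_sumr (sum_delta i (fun=> c)).
rewrite /welfare -[g i c](sum_delta i (fun=> g i c)) !mulr_sumr -!big_split /=.
apply: ler_sum => j _.
rewrite /w; have [->|ji] := eqVneq j i.
  by rewrite y_out // y'_out // (g0 rho xi q_ge0) !mulr0 !add0r !mul1r.
by rewrite !mul0r !addr0; apply: g_concave.
Qed.

Definition restrict (S : {set 'I_n}) (z : 'I_n -> R) (j : 'I_n) : R :=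
  if j \in S :|: [set nl] then z j else 0.

Lemma alloc_restrict S U z : alloc U z -> alloc S (restrict S z).
Proof.
case=> z0 _ z1; split=> [j|j /negbTE jP|]; rewrite /restrict ?jP //; first by case: ifP.
by apply: le_trans z1; apply: ler_sum => j _; case: ifP.
Qed.

Lemma alloc_split (S U : {set 'I_n}) (z : 'I_n -> R) (F : 'I_n -> R -> R) :
  nl \notin U -> alloc U z -> (forall j, F j 0 = 0) ->
  \sum_j F j (z j) = \sum_j F j (restrict S z j) + \sum_(j in U :\: S) F j (z j).
Proof.
move=> nlU [_ z_out _] F0; rewrite [X in _ + X]big_mkcond -big_split /=.
apply: eq_bigr => j _; rewrite /restrict !inE.
have [jS|jS] /= := boolP (j \in S); first by rewrite addr0.
have [->|jnl] /= := eqVneq j nl; first by rewrite (negbTE nlU) addr0.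
rewrite F0 add0r; case: ifP => // jU.
by rewrite z_out // !inE (negbTE jnl) jU.
Qed.


Lemma restrict_budget (S U : {set 'I_n}) z : nl \notin U -> alloc U z ->
  \sum_j restrict S z j + \sum_(i in U :\: S) z i <= 1.
Proof.
by move=> nlU Az; have [_ _ z1] := Az; rewrite -(alloc_split S (F := fun _ x => x)).
Qed.

Lemma new_mass_budget (S U : {set 'I_n}) z i : nl \notin U -> alloc U z ->
  i \in U :\: S -> \sum_j restrict S z j + z i <= 1.
Proof.
move=> nlU Az iT; have [z0 _ _] := Az.
apply: le_trans (restrict_budget S nlU Az); rewrite lerD2l (bigD1 i) //= lerDl.
exact: sumr_ge0.
Qed.

(* Weight with which the restriction of [z] is mixed in, to make room for the
   mass [z i] on a new action [i] (see [mixture_budget]). *)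
Definition weight (S : {set 'I_n}) (z : 'I_n -> R) (i : 'I_n) : R :=
  z i / (1 - \sum_j restrict S z j).

Lemma weight_bounds (S U : {set 'I_n}) z i : nl \notin U -> alloc U z ->
  i \in U :\: S -> 0 <= weight S z i <= 1.
Proof.
move=> nlU Az iT; have [z0 _ _] := Az.
by have [] := mixture_budget (z0 i) ler01 (new_mass_budget nlU Az iT).
Qed.

Lemma weight_sum_le1 (S U : {set 'I_n}) z : nl \notin U -> alloc U z ->
  \sum_(i in U :\: S) weight S z i <= 1.
Proof.
move=> nlU Az; have [z0 _ _] := Az.
have [/andP[_ t1] _ _] := mixture_budget (sumr_ge0 _ (fun i _ => z0 i)) ler01
  (restrict_budget S nlU Az).
by rewrite /weight -mulr_suml.
Qed.

Lemma marginal_gain_mixture (S U : {set 'I_n}) z i y : nl \notin U -> alloc U z ->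
  i \in U :\: S -> alloc S y ->
  (1 - weight S z i) * welfare y + weight S z i * welfare (restrict S z) + g i (z i)
    <= f (S :|: [set i]).
Proof.
move=> nlU Az iT Ay; have [z0 _ _] := Az; have [_ _ y1] := Ay.
have [t01 _ budget] := mixture_budget (z0 i) y1 (new_mass_budget nlU Az iT).
apply: f_add_mixture Ay (alloc_restrict S Az) (z0 i) t01 budget.
move: iT; rewrite !inE negb_or => /andP[-> iU] /=.
by apply: contra nlU => /eqP <-.
Qed.

(* Summing [marginal_gain_mixture] over [i] bounds a multiple of the welfare
   of every allocation for [S], hence of [f S]; the weights sum to at most one. *)
Lemma f_gap_le_marginals (S U : {set 'I_n}) (z : 'I_n -> R) : nl \notin U -> alloc U z ->
  welfare z - f S <= \sum_(i in U :\: S) (f (S :|: [set i]) - f S).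
Proof.
move=> nlU Az; set T := U :\: S; set t := weight S z.
set Z := welfare (restrict S z); set gT := \sum_(i in T) g i (z i).
have welfare_z : welfare z = Z + gT.
  by apply: (alloc_split S (F := g)) => // j; apply: g0.
have Z_le : Z <= f S by apply/welfare_le_f/(alloc_restrict S Az).
set tT := \sum_(i in T) t i; have tT1 : tT <= 1 by apply: weight_sum_le1.
have tT_le : tT <= #|T|%:R.
  rewrite -sum1_card natr_sum; apply: ler_sum => i iT.
  by case/andP: (weight_bounds nlU Az iT).
have fS_le : (#|T|%:R - tT) * f S <= \sum_(i in T) f (S :|: [set i]) - tT * Z - gT.
  apply: f_le; first by rewrite subr_ge0.
  move=> y Ay; have : \sum_(i in T) ((1 - t i) * welfare y + t i * Z + g i (z i))
      <= \sum_(i in T) f (S :|: [set i]).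
    by apply: ler_sum => i iT; apply: (marginal_gain_mixture nlU Az iT Ay).
  have sum_1t : \sum_(i in T) (1 - t i) * welfare y = (#|T|%:R - tT) * welfare y.
    by rewrite -mulr_suml sumrB sumr_const -mulr_natl mulr1.
  by rewrite !big_split /= sum_1t -/gT -(mulr_suml _ _ t Z) -/tT; lra.
rewrite welfare_z sumrB sumr_const -mulr_natl.
have : 0 <= (1 - tT) * (f S - Z) by rewrite mulr_ge0 // subr_ge0.
move: fS_le; rewrite !mulrBl !mulrBr !mul1r; lra.
Qed.

End Allocation.

Section Schemes.
Variables (R : realType) (n m k : nat) (q rho xi : 'I_n -> 'I_m -> R).
Hypotheses (q_ge0 : forall i j, 0 <= q i j) (q_sum1 : forall i, \sum_j q i j = 1).

Lemma prior_ge0 (th : state n m) : 0 <= prior q th.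
Proof. by apply: prodr_ge0 => i _. Qed.

Lemma prior_sum1 : \sum_(th : state n m) prior q th = 1.
Proof. by rewrite /prior -bigA_distr_bigA big1 // => i _; apply: q_sum1. Qed.

Lemma prior_marginal a j :
  \sum_(th : state n m) (th a == j)%:R * prior q th = q a j.
Proof.
pose F (i : 'I_n) (t : 'I_m) := if i == a then (t == j)%:R * q i t else q i t.
have := @bigA_distr_bigA R 0 1 *%R +%R _ _ F; rewrite (bigD1 a) //= /F eqxx.
rewrite sum_delta big1 ?mulr1; last first.
  by move=> i /negbTE ia; rewrite ia q_sum1.
move=> ->; apply: eq_bigr => th _; rewrite /prior (bigD1 a) //= mulrA.
rewrite [in RHS](bigD1 a) //= eqxx.
by congr (_ * _); apply: eq_bigr => i /negbTE ->.
Qed.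

Lemma signal_util_attained (psi : scheme R n m k) s (i0 : 'I_n) :
  exists i, (forall j, recv_val q rho psi s j <= recv_val q rho psi s i) /\
            signal_util q rho xi psi s = send_val q xi psi s i.
Proof.
pose best := [pred i | [forall j, recv_val q rho psi s j <= recv_val q rho psi s i]].
have [b _ b_max] := arg_maxP (recv_val q rho psi s) (isT : predT i0).
have best_b : best b by apply/forallP => j; apply: b_max.
have [i /forallP i_best i_max] := arg_maxP (send_val q xi psi s) best_b.
exists i; split=> //; apply/eqP; rewrite eq_le; apply/andP; split.
  apply: ge_sup; first by exists (send_val q xi psi s i), i.
  by move=> _ [j j_best <-]; apply: i_max; apply/forallP.
apply: ub_le_sup; last by exists i.
by exists (send_val q xi psi s i) => _ [j j_best <-]; apply: i_max; apply/forallP.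
Qed.

(* Pooling the signals of [A] that all recommend action [a]: the type
   distribution of [a] conditional on these signals is feasible for [g_a] with
   mass their total probability, provided [a] is obedient with value at least
   [rho_E] on each of them. *)
Lemma pooled_signals_le_g (psi : scheme R n m k) (a : 'I_n) (A : pred 'I_k) :
  valid_scheme psi ->
  (forall s, A s -> rhoE q rho * sig_prob q psi s <= recv_val q rho psi s a) ->
  \sum_(s | A s) send_val q xi psi s a <= g q rho xi a (\sum_(s | A s) sig_prob q psi s).
Proof.
move=> [psi0 psi1] obey.
pose w th := prior q th * \sum_(s | A s) psi th s.
pose x j := \sum_(th : state n m) (th a == j)%:R * w th.
have pool (c : 'I_m -> R) :
    \sum_j x j * c j = \sum_(s | A s) \sum_th prior q th * psi th s * c (th a).
  rewrite sum_pushforward exchange_big /=; apply: eq_bigr => th _.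
  by rewrite /w mulr_sumr mulr_suml.
have mass : \sum_j x j = \sum_(s | A s) sig_prob q psi s.
  transitivity (\sum_j x j * 1); first by apply: eq_bigr => j _; rewrite mulr1.
  by rewrite pool; apply: eq_bigr => s _; apply: eq_bigr => th _; rewrite mulr1.
have w_ge0 th : 0 <= w th by rewrite mulr_ge0 ?prior_ge0 ?sumr_ge0.
have w_le th : w th <= prior q th.
  rewrite ler_piMr ?prior_ge0 // -(psi1 th).
  by rewrite [leRHS](bigID A) /= lerDl sumr_ge0.
rewrite [leLHS](_ : _ = gvalue xi a x); last by rewrite /gvalue pool.
apply: g_ge; split=> [j||]; rewrite ?mass //.
- rewrite sumr_ge0 => [/=|th _]; last by rewrite mulr_ge0 ?ler0n.
  by rewrite -prior_marginal; apply: ler_sum => th _; rewrite ler_wpM2l ?ler0n.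
- by rewrite pool mulr_sumr; apply: ler_sum => s As; apply: obey.
Qed.

Lemma best_response_rhoE (psi : scheme R n m k) s i : valid_scheme psi ->
  (0 < sig_prob q psi s ->
     exists j, rhoE q rho * sig_prob q psi s <= recv_val q rho psi s j) ->
  (forall j, recv_val q rho psi s j <= recv_val q rho psi s i) ->
  rhoE q rho * sig_prob q psi s <= recv_val q rho psi s i.
Proof.
move=> [psi0 _] obey i_best.
have mass0 th : 0 <= prior q th * psi th s by rewrite mulr_ge0 ?prior_ge0.
have [P_gt0|] := ltrP 0 (sig_prob q psi s).
  by have [j Hj] := obey P_gt0; apply: le_trans Hj (i_best j).
rewrite le_eqVlt ltNge sumr_ge0 // orbF => /eqP P0.
have /psumr_eq0P null := P0; rewrite P0 mulr0 /recv_val big1 // => th _.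
by rewrite null ?mul0r.
Qed.

(* From a [rho_E]-optimal scheme: recommending to every signal a best response
   and pooling the signals by recommended action yields an allocation on at
   most [k] actions besides [nl] whose welfare is at least the sender utility. *)
Lemma scheme_allocation (nl : 'I_n) (psi : scheme R n m k) : valid_scheme psi ->
  (forall s, 0 < sig_prob q psi s ->
     exists j, rhoE q rho * sig_prob q psi s <= recv_val q rho psi s j) ->
  exists (U : {set 'I_n}) (z : 'I_n -> R), [/\ nl \notin U, (#|U| <= k)%N, alloc nl U z &
                  sender_util q rho xi psi <= welfare q rho xi z].
Proof.
move=> psi_ok obey; have [psi0 psi1] := psi_ok.
have [rec rec_spec] := fin_all_exists (fun s => signal_util_attained psi s nl).
pose P := sig_prob q psi.
have P0 s : 0 <= P s by apply: sumr_ge0 => th _; rewrite mulr_ge0 ?prior_ge0.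
pose z a := \sum_(s | rec s == a) P s.
exists ([set rec s | s in 'I_k] :\ nl), z; split.
- by rewrite !inE eqxx.
- apply: leq_trans (subset_leq_card (subD1set _ _)) _.
  by apply: leq_trans (leq_imset_card _ _) _; rewrite card_ord.
- split=> [a|a|].
  + by apply: sumr_ge0 => s _; apply: P0.
  + rewrite !inE => /norP[/nandP[/negPn/eqP ->|a_rec] a_nl].
      by rewrite eqxx in a_nl.
    rewrite /z big_pred0 // => s; apply: contraNF a_rec => /eqP <-.
    exact: imset_f.
  + have -> : \sum_a z a = \sum_s P s by rewrite (partition_big rec predT).
    rewrite /P /sig_prob exchange_big /=.
    rewrite -prior_sum1; apply: ler_sum => th _.
    by rewrite -mulr_sumr psi1 mulr1.
rewrite /sender_util (partition_big rec predT) //=; apply: ler_sum => a _.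
rewrite (eq_bigr (fun s => send_val q xi psi s a)); last first.
  by move=> s /eqP <-; case: (rec_spec s).
apply: pooled_signals_le_g => // s /eqP <-; have [rec_best _] := rec_spec s.
exact: best_response_rhoE psi_ok (obey s) rec_best.
Qed.

End Schemes.

(* From here on, set comprehensions such as [[set x in s]] denote finite sets. *)
Local Close Scope classical_set_scope.

Section Greedy.
Variables (R : realType) (n m k : nat) (q rho xi : 'I_n -> 'I_m -> R).
Hypothesis q_ge0 : forall i j, 0 <= q i j.
Variable nl : 'I_n.

Local Notation f := (f q rho xi nl).

Lemma greedy_uniq s : actions_greedy k q rho xi nl s -> uniq s.
Proof.
case=> size_s greedy; suff take_uniq t : (t <= size s)%N -> uniq (take t s).
  by rewrite -(take_size s) take_uniq.
elim: t => [|t IH] t_lt; first by rewrite take0.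
rewrite (take_nth nl) // rcons_uniq IH ?(ltnW t_lt) // andbT.
have [_ fresh _] := greedy t (leq_trans t_lt (eq_leq size_s)).
by rewrite inE in fresh.
Qed.

Lemma greedy_prefix_step (s : seq 'I_n) t : (t < size s)%N ->
  [set x in take t.+1 s] = [set x in take t s] :|: [set nth nl s t].
Proof.
move=> t_lt; rewrite (take_nth nl) //.
by apply/setP => x; rewrite !inE mem_rcons in_cons orbC.
Qed.

(* Standard greedy analysis: against any allocation [z] on at most [k] actions
   besides [nl], each greedy step closes at least a [1/k] fraction of the
   remaining welfare gap, by [f_gap_le_marginals] and the greedy choice. *)
Lemma greedy_gap s (U : {set 'I_n}) z : (0 < k)%N -> actions_greedy k q rho xi nl s ->
  nl \notin U -> (#|U| <= k)%N -> alloc nl U z ->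
  forall t, (t <= k.-1)%N ->
  welfare q rho xi z - f [set x in take t s] <=
  (1 - k%:R^-1) ^+ t * (welfare q rho xi z - f finset.set0).
Proof.
move=> k_gt0 [size_s greedy] nlU U_k Az; set V := welfare q rho xi z.
have k_pos : (0 : R) < k%:R by rewrite ltr0n.
have c0 : 0 <= 1 - k%:R^-1 :> R by rewrite subr_ge0 invf_le1 // ler1n.
elim=> [|t IH] t_lt.
  by rewrite take0 expr0 mul1r; apply: lerB => //; apply: f_mono.
have [_ _ a_best] := greedy t t_lt.
rewrite greedy_prefix_step ?size_s //.
set St := [set x in take t s] in IH a_best *; set a := nth nl s t in a_best *.
set D := f (St :|: [set a]) - f St in a_best *.
have D0 : 0 <= D by rewrite subr_ge0 f_mono // finset.subsetUl.
have gap_le : V - f St <= k%:R * D.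
  apply: le_trans (f_gap_le_marginals rho xi q_ge0 St nlU Az) _.
  apply: (@le_trans _ _ (\sum_(i in U :\: St) D)).
    apply: ler_sum => i /setDP[iU iSt]; apply: a_best iSt.
    by apply: contraNneq nlU => <-.
  rewrite sumr_const -[D *+ _]mulr_natl; apply: ler_wpM2r => //; rewrite ler_nat.
  exact: leq_trans (subset_leq_card (finset.subsetDl _ _)) U_k.
rewrite exprS -mulrA; apply: le_trans (ler_wpM2l c0 (IH (ltnW t_lt))).
have : k%:R^-1 * (V - f St) <= D by rewrite ler_pdivrMl.
rewrite mulrBl mul1r /D; lra.
Qed.

End Greedy.

(* Lemma 4.4: [f] of the greedy set is at least [1 - (1 - 1/k)^(k-1)] times the
   optimal sender utility: compare with the allocation of [scheme_allocation]
   built from a rho_E-optimal scheme, via [greedy_gap] after [k - 1] steps. *)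
Theorem lemma4p4 (R : realType) (n m k : nat) (q rho xi : 'I_n -> 'I_m -> R)
  (nl : 'I_n)
  (Hq0 : forall i j, 0 <= q i j)
  (Hq1 : forall i, \sum_(j < m) q i j = 1)
  (Hk : (2 <= k <= n)%N)
  (Hnl : nat_of_ord nl = n.-1)
  (HnlE : exp_rho q rho nl = rhoE q rho)
  (HnlX : forall i, exp_rho q rho i = rhoE q rho -> exp_xi q xi i <= exp_xi q xi nl)
  (HE : rhoE_optimal k q rho xi)
  (phi : scheme R n m k) (Hphi : optimal_scheme q rho xi phi)
  (s : seq 'I_n) (Hs : actions_greedy k q rho xi nl s) :
  #|[set x in s]| = k.-1 /\
  (1 - (1 - k%:R^-1) ^+ k.-1) * sender_util q rho xi phi <= f q rho xi nl [set x in s].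
Proof.
have k_gt0 : (0 < k)%N by case/andP: Hk => /ltnW.
have [size_s _] := Hs.
split; first by rewrite cardsE -size_s; apply/card_uniqP; apply: greedy_uniq Hs.
have [psi [[psi_ok psi_opt] obey]] := HE.
have [U [z [nlU U_k Az util_le]]] := scheme_allocation xi Hq0 Hq1 nl psi_ok obey.
have phi_le : sender_util q rho xi phi <= welfare q rho xi z.
  exact: le_trans (psi_opt _ Hphi.1) util_le.
have := greedy_gap Hq0 k_gt0 Hs nlU U_k Az (leqnn _).
rewrite -size_s take_size size_s; set c := _ ^+ k.-1.
have c0 : 0 <= c by rewrite exprn_ge0 // subr_ge0 invf_le1 ?ler1n ?ltr0n.
have c1 : 0 <= 1 - c.
  by rewrite subr_ge0 exprn_ile1 // ?subr_ge0 ?invf_le1 ?ler1n ?ltr0n // gerBl invr_ge0.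
have := mulr_ge0 c0 (f_ge0 rho xi Hq0 nl finset.set0).
have := ler_wpM2l c1 phi_le.
rewrite !mulrBl !mulrBr !mul1r; lra.
Qed.
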